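(* Let $n\in\mathbb{Z}_{++}$, let $G=[g_{ij}]\in\mathbb{R}_+^{n\times n}$ be an entrywise nonnegative matrix, and let $\alpha,p\in\mathbb{R}$ with $\alpha\ge p$, $\beta\in[0,1)$ and $\delta\in(0,1)$. Assume the spectral radius of $G$ satisfies $\rho(G)\le \Lambda_{\max}$ for some $0<\Lambda_{\max}<\frac{1}{\delta(1+\beta)}$. For seeding vectors $\bar{\mathbf s},\underline{\mathbf s}\in\mathbb{R}^n_+$ define the sequences $\bar{\mathbf x}(k),\underline{\mathbf x}(k)\in\mathbb{R}^n$, $k\in\mathbb{Z}_+$, by $\bar{\mathbf x}(0)=\bar{\mathbf s}$, $\underline{\mathbf x}(0)=\underline{\mathbf s}$ and $$\bar{\mathbf x}(k+1)=(\alpha-p)\mathbf 1_n+G\bar{\mathbf x}(k)+\beta G\underline{\mathbf x}(k),\qquad \underline{\mathbf x}(k+1)=(\alpha-p)\mathbf 1_n+G\underline{\mathbf x}(k)+\beta G\bar{\mathbf x}(k),$$ and define the utilities $$\bar{\mathfrak U}(\bar{\mathbf s},\underline{\mathbf s})=p\sum_{k=0}^{\infty}\delta^k\mathbf 1_n^\top\bar{\mathbf x}(k)-\tfrac12\|\bar{\mathbf s}\|_2^2,\qquad \underline{\mathfrak U}(\bar{\mathbf s},\underline{\mathbf s})=p\sum_{k=0}^{\infty}\delta^k\mathbf 1_n^\top\underline{\mathbf x}(k)-\tfrac12\|\underline{\mathbf s}\|_2^2.$$ Let $\mathbf c=[c_1,\dots,c_n]^\top=\tfrac12\big(I_n-\delta(1-\beta)G^\top\big)^{-1}\mathbf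 1_n+\tfrac12\big(I_n-\delta(1+\beta)G^\top\big)^{-1}\mathbf 1_n$. Then for every $i\in[n]$, $$\frac{\partial\bar{\mathfrak U}}{\partial\bar s_i}=p\,c_i-\bar s_i,\qquad \frac{\partial\underline{\mathfrak U}}{\partial\underline s_i}=p\,c_i-\underline s_i.$$
   Context: $\mathbf 1_n$ is the all-ones vector in $\mathbb{R}^n$, $[n]=\{1,\dots,n\}$. The vector $(I_n-aG^\top)^{-1}\mathbf 1_n$ is the Katz–Bonacich centrality of $G$ with attenuation factor $a$. Interpretation: $\bar x_i(k)$ and $\underline x_i(k)$ are agent $i$'s consumption of the products of firm $a$ and firm $b$ at time $k$, and $\bar{\mathbf s},\underline{\mathbf s}$ are the two firms' seedings. *)

From HB Require Import structures.
From mathcomp Require Import all_boot all_order all_algebra.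
From mathcomp Require Import all_classical all_reals all_analysis.
From mathcomp Require Import complex.
Set Implicit Arguments. Unset Strict Implicit. Unset Printing Implicit Defensive.
Import Order.TTheory GRing.Theory Num.Theory.
Local Open Scope ring_scope.

Definition spectral_radius_le (R : realType) (n : nat) (G : 'M[R]_n) (L : R) :=
  forall z : R[i], root (map_poly (fun x : R => (x%:C)%C) (char_poly G)) z ->
    `|z| <= (L%:C)%C.

Definition ones (R : ringType) (n : nat) : 'cV[R]_n := const_mx 1.

Fixpoint xpair (R : realType) (n : nat) (G : 'M[R]_n) (alpha p beta : R)
    (sb su : 'cV[R]_n) (k : nat) : 'cV[R]_n * 'cV[R]_n :=
  match k with
  | 0 => (sb, su)
  | k'.+1 =>
      let xb := (xpair G alpha p beta sb su k').1 in
      let xu := (xpair G alpha p beta sb su k').2 in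
      ((alpha - p) *: ones R n + G *m xb + beta *: (G *m xu),
       (alpha - p) *: ones R n + G *m xu + beta *: (G *m xb))
  end.

Definition xbar R n G alpha p beta sb su k :=
  (@xpair R n G alpha p beta sb su k).1.
Definition xunder R n G alpha p beta sb su k :=
  (@xpair R n G alpha p beta sb su k).2.

Definition sum_entries (R : ringType) (n : nat) (x : 'cV[R]_n) : R :=
  \sum_(i < n) x i 0.

Definition sqnorm2 (R : ringType) (n : nat) (x : 'cV[R]_n) : R :=
  \sum_(i < n) (x i 0) ^+ 2.

Definition Ubar (R : realType) (n : nat) (G : 'M[R]_n) (alpha p beta delta : R)
    (sb su : 'cV[R]_n) : R :=
  p * (limn (fun N : nat => \sum_(0 <= k < N) (delta ^+ k * sum_entries (xbar G alpha p beta sb su k))))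
  - 2^-1 * sqnorm2 sb.

Definition Uunder (R : realType) (n : nat) (G : 'M[R]_n) (alpha p beta delta : R)
    (sb su : 'cV[R]_n) : R :=
  p * (limn (fun N : nat => \sum_(0 <= k < N) (delta ^+ k * sum_entries (xunder G alpha p beta sb su k))))
  - 2^-1 * sqnorm2 su.

Definition cvec (R : realType) (n : nat) (G : 'M[R]_n) (beta delta : R) : 'cV[R]_n :=
  2^-1 *: (invmx (1%:M - (delta * (1 - beta)) *: G^T) *m ones R n)
  + 2^-1 *: (invmx (1%:M - (delta * (1 + beta)) *: G^T) *m ones R n).

(* Perturbing sb by t e_i shifts both trajectories by t y(k), where y solves
   the recursion with alpha = p started from the seeds (e_i, 0).  The sum and
   the difference of the two components of y evolve under (1 + beta) G and
   (1 - beta) G, so sum_k delta^k 1^T y_1(k) is the average of the i-th column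
   sums of the Neumann series of delta (1 + beta) G and delta (1 - beta) G,
   which is c_i.  Hence Ubar(sb + t e_i) = Ubar(sb) + t (p c_i - sb_i) - t^2/2.
   The Neumann series converge because every complex eigenvalue of
   delta (1 +- beta) G has modulus < 1: factoring the characteristic polynomial
   and using Cayley-Hamilton, the entries of G^k are O(s^k) for every s > Lmax.
   The unperturbed series converges because it is nondecreasing (trajectories
   stay nonnegative) and bounded through the nonnegative inverse of
   I - delta (1 + beta) G. *)

From HB Require Import structures.
From mathcomp Require Import all_boot all_order all_algebra.
From mathcomp Require Import all_classical all_reals all_analysis.
From mathcomp Require Import complex.
From mathcomp Require Import ring lra.
Import Order.TTheory GRing.Theory Num.Theory.
Import numFieldNormedType.Exports.
Local Open Scope classical_set_scope.
Local Open Scope ring_scope.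

Lemma affine_rec_geometric_bound (F : numFieldType) (a b : nat -> F) (lam r s C : F) :
  0 <= r -> r < s -> `|lam| <= r -> 0 <= C ->
  (forall k, a k.+1 = lam * a k + b k) -> (forall k, `|b k| <= C * s ^+ k) ->
  forall k, `|a k| <= (`|a 0%N| + C / (s - r)) * s ^+ k.
Proof.
move=> r0 rs lr C0 ha hb.
have sr : 0 < s - r by rewrite subr_gt0.
set D := _ + _.
have D0 : 0 <= D by rewrite addr_ge0 // divr_ge0 // ltW.
elim=> [|k IH]; first by rewrite expr0 mulr1 lerDl divr_ge0 // ltW.
rewrite ha (le_trans (ler_normD _ _)) //.
have lam_ak : `|lam * a k| <= r * (D * s ^+ k) by rewrite normrM ler_pM.
apply: le_trans (lerD lam_ak (hb k)) _.
have -> : r * (D * s ^+ k) + C * s ^+ k = (r * D + C) * s ^+ k by ring.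
rewrite exprS mulrA; apply: ler_wpM2r; first by rewrite exprn_ge0 // (le_trans r0) // ltW.
have -> : D * s = r * D + (s - r) * D by ring.
rewrite lerD2l /D mulrDr mulrCA divff ?mulr1 ?gt_eqF //.
by rewrite lerDr mulr_ge0 // ltW.
Qed.

(* Peel off one root l at a time: with X' := (M - l) X, the entries of M^k X
   satisfy a_{k+1} = l a_k + (M^k X')_ij. *)
Lemma annihilated_expmx_bound {F : numClosedFieldType} {m p : nat}
    {M : 'M[F]_m.+1} {r : F} (s : F) {ls : seq F} {X : 'M[F]_(m.+1, p)} :
  0 <= r -> r < s -> (forall l, l \in ls -> `|l| <= r) ->
  horner_mx M (\prod_(l <- ls) ('X - l%:P)) *m X = 0 ->
  forall i j, exists2 D, 0 <= D & forall k, `|(M ^+ k *m X) i j| <= D * s ^+ k.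
Proof.
move=> r0 rs; elim: ls X => [|l ls IH] X hls hX i j.
  move: hX; rewrite big_nil rmorph1 mul1mx => ->.
  by exists 0 => // k; rewrite mulmx0 mxE normr0 mul0r.
move: hX; rewrite big_cons mulrC rmorphM /= -mulmxA rmorphB /= horner_mx_X horner_mx_C.
set X' := (M - l%:M) *m X => hX.
have [|D' D'0 hD'] := IH X' _ hX i j.
  by move=> l' hl'; apply: hls; rewrite inE hl' orbT.
have sr : 0 < s - r by rewrite subr_gt0.
exists (`|(M ^+ 0 *m X) i j| + D' / (s - r)).
  by rewrite addr_ge0 // divr_ge0 // ltW.
apply: (@affine_rec_geometric_bound _ (fun k => (M ^+ k *m X) i j)
  (fun k => (M ^+ k *m X') i j) l r s D') => //.
  by apply: hls; rewrite inE eqxx.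
move=> k; rewrite exprSr -mulmxE -mulmxA.
have -> : M *m X = X' + l *: X by rewrite /X' mulmxBl mul_scalar_mx addrNK.
by rewrite mulmxDr -scalemxAr !mxE addrC mulrC.
Qed.

Lemma normc_real (R : rcfType) (x : R) : `|x%:C%C| = `|x|%:C%C.
Proof. by rewrite normc_def /= expr0n /= addr0 sqrtr_sqr. Qed.

Lemma map_mxX (R S : comNzRingType) (f : {rmorphism R -> S}) m (A : 'M[R]_m) k :
  map_mx f (A ^+ k) = map_mx f A ^+ k.
Proof.
elim: k => [|k IH]; first by rewrite !expr0 map_mx1.
by rewrite !exprS -!mulmxE map_mxM IH.
Qed.

Lemma exprZmx (R : comNzRingType) m (A : 'M[R]_m) (c : R) k :
  (c *: A) ^+ k = c ^+ k *: A ^+ k.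
Proof.
elim: k => [|k IH]; first by rewrite !expr0 scale1r.
by rewrite !exprS -!mulmxE IH -scalemxAr -scalemxAl scalerA mulrC.
Qed.

Lemma expmx_geometric_bound {R : realType} {n} {G : 'M[R]_n} {L : R} (s : R) :
  spectral_radius_le G L -> 0 <= L -> L < s ->
  forall i j, exists D, forall k, `|(G ^+ k) i j| <= D * s ^+ k.
Proof.
case: n G => [G _ _ _ [] //|m G hrho L0 Ls i j].
pose Gc := map_mx (real_complex R) G.
have [rs Hrs] := closed_field_poly_normal (char_poly Gc).
rewrite (monicP (char_poly_monic Gc)) scale1r in Hrs.
have rs_le : forall l, l \in rs -> `|l| <= L%:C%C.
  by move=> l hl; apply: hrho; rewrite map_char_poly -/Gc Hrs root_prod_XsubC.
have CH : horner_mx Gc (\prod_(l <- rs) ('X - l%:P)) *m 1%:M = 0.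
  by rewrite -Hrs Cayley_Hamilton mul0mx.
have [||D D0 hD] := annihilated_expmx_bound s%:C%C _ _ rs_le CH i j.
- by rewrite lecR.
- by rewrite ltcR.
have /complex_realP [d dE] : D \is Num.real by rewrite ger0_real.
exists d => k; move: (hD k); rewrite dE.
by rewrite mulmx1 /Gc -map_mxX mxE normc_real -rmorphXn -rmorphM lecR.
Qed.

Lemma expmx_cvg0 (R : realType) n (G : 'M[R]_n) (L g : R) :
  spectral_radius_le G L -> 0 <= L -> 0 < g -> g * L < 1 ->
  forall i j, (fun N => ((g *: G) ^+ N) i j) @ \oo --> 0.
Proof.
move=> hrho L0 g0 gL i j.
pose s := (L + g^-1) / 2.
have Ls : L < s.
  by rewrite /s ltr_pdivlMr // mulrDr mulr1 ltrD2l -(ltr_pM2l g0) mulfV ?gt_eqF.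
have gs1 : g * s < 1.
  by rewrite /s mulrA ltr_pdivrMr // mulrDr mulfV ?gt_eqF // mul1r; lra.
have gs0 : 0 <= g * s by rewrite mulr_ge0 // ?ltW // (le_lt_trans L0).
have [D hD] := expmx_geometric_bound s hrho L0 Ls i j.
apply/norm_cvg0P; apply: (@squeeze_cvgr _ _ _ _ (cst 0) (fun N => D * (g * s) ^+ N)).
- near=> N; rewrite normr_ge0 /= exprZmx mxE normrM normrX gtr0_norm //.
  by rewrite exprMn mulrCA ler_wpM2l // exprn_ge0 // ltW.
- exact: cvg_cst.
- by rewrite -(mulr0 D); apply: cvgMl_tmp; apply: cvg_expr; rewrite ger0_norm.
Unshelve. all: by end_near. Qed.

Lemma unitmx_1_subZ (R : realType) n (G : 'M[R]_n) (L g : R) :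
  spectral_radius_le G L -> 0 < g -> g * L < 1 -> (1%:M - g *: G) \in unitmx.
Proof.
move=> hrho g0 gL; rewrite unitmxE unitfE; apply/negP => /det0P [v v0].
move/eqP; rewrite mulmxBr mulmx1 -scalemxAr subr_eq0 => /eqP vE.
have : eigenvalue G g^-1.
  by apply/eigenvalueP; exists v => //; rewrite {2}vE scalerA mulVf ?gt_eqF // scale1r.
rewrite eigenvalue_root_char => /(rmorph_root (real_complex R)) /hrho.
rewrite normc_real lecR gtr0_norm ?invr_gt0 // => gVL.
by move: gL; rewrite -(mulfV (lt0r_neq0 g0)) ltr_pM2l // ltNge gVL.
Qed.

Lemma cvg_neumann_series {R : realType} {n} {M : 'M[R]_n} :
  (1%:M - M) \in unitmx -> (forall i j, (fun N => (M ^+ N) i j) @ \oo --> 0) ->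
  forall i j, (fun N => (\sum_(0 <= k < N) M ^+ k) i j) @ \oo --> invmx (1%:M - M) i j.
Proof.
move=> hu hc i j.
have telescope N : (\sum_(0 <= k < N) M ^+ k) *m (1%:M - M) = 1%:M - M ^+ N.
  elim: N => [|N IH]; first by rewrite big_nil mul0mx expr0 subrr.
  by rewrite big_nat_recr //= mulmxDl IH mulmxBr mulmx1 exprSr -mulmxE addrA subrK.
have -> : (fun N => (\sum_(0 <= k < N) M ^+ k) i j) =
    (fun N => invmx (1%:M - M) i j - \sum_l (M ^+ N) i l * invmx (1%:M - M) l j).
  by apply/funext => N; rewrite -[\sum_(0 <= k < N) _](mulmxK hu) telescope mulmxBl mul1mx !mxE.
rewrite -[X in _ --> X]subr0; apply: cvgB; first exact: cvg_cst.
rewrite [X in _ --> X](_ : 0 = \sum_l 0 * invmx (1%:M - M) l j); last first.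
  by rewrite big1 // => l _; rewrite mul0r.
by apply: cvg_big => [|l _]; [exact: add_continuous | exact: cvgMr_tmp].
Qed.

Lemma expmx_ge0 {R : numDomainType} {n} {A : 'M[R]_n} :
  (forall i j, 0 <= A i j) -> forall k i j, 0 <= (A ^+ k) i j.
Proof.
move=> hA; elim=> [|k IH] i j; first by rewrite expr0 mxE ler0n.
by rewrite exprS -mulmxE mxE sumr_ge0 // => l _; rewrite mulr_ge0.
Qed.

Lemma invmx_1_sub_ge0 {R : realType} {n} {M : 'M[R]_n} :
  (forall i j, 0 <= M i j) -> (1%:M - M) \in unitmx ->
  (forall i j, (fun N => (M ^+ N) i j) @ \oo --> 0) ->
  forall i j, 0 <= invmx (1%:M - M) i j.
Proof.
move=> hM hu hc i j; have Mcvg := cvg_neumann_series hu hc i j.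
rewrite -(cvg_lim _ Mcvg) //; apply: limr_ge; first exact: cvgP Mcvg.
by near=> N; rewrite summxE sumr_ge0 // => k _; apply: expmx_ge0.
Unshelve. all: by end_near. Qed.

Lemma affine_orbit_sum_le {R : realType} {n} {M : 'M[R]_n} {v g : nat -> 'cV[R]_n}
    {h : 'cV[R]_n} :
  (1%:M - M) \in unitmx -> (forall i j, 0 <= invmx (1%:M - M) i j) ->
  (forall k i, 0 <= v k i 0) -> (forall k, v k.+1 = g k + M *m v k) ->
  (forall N i, (\sum_(0 <= k < N) g k) i 0 <= h i 0) ->
  forall N i, (\sum_(0 <= k < N) v k) i 0 <= (invmx (1%:M - M) *m (v 0%N + h)) i 0.
Proof.
move=> hu inv_ge0 v_ge0 vS g_le N i.
set V := fun N => \sum_(0 <= k < N) v k.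
have VS : V N.+1 = v 0%N + \sum_(0 <= k < N) g k + M *m V N.
  rewrite /V big_nat_recl // (eq_bigr _ (fun k _ => vS k)) big_split /=.
  by rewrite mulmx_sumr addrA.
have VB l : ((1%:M - M) *m V N) l 0 <= (v 0%N + h) l 0.
  have -> : (1%:M - M) *m V N = v 0%N + \sum_(0 <= k < N) g k - v N.
    rewrite -[v 0%N + _](addrK (M *m V N)) -VS /V big_nat_recr //=.
    by rewrite mulmxBl mul1mx addrAC addrK.
  rewrite mxE [X in _ <= X]mxE mxE -addrA lerD2l.
  by rewrite mxE lerBlDr (le_trans (g_le N l)) // lerDl.
rewrite -[\sum_(0 <= k < N) v k](mulKmx hu) [X in X <= _]mxE [X in _ <= X]mxE.
apply: ler_sum => l _.
by rewrite ler_wpM2l.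
Qed.

Section Diffusion.
Context {R : realType} {n : nat} (G : 'M[R]_n) (b : R).
Implicit Types (a p t : R) (sb su e : 'cV[R]_n).

Lemma xbarS a p sb su k : xbar G a p b sb su k.+1 =
  (a - p) *: ones R n + G *m xbar G a p b sb su k + b *: (G *m xunder G a p b sb su k).
Proof. by []. Qed.

Lemma xunderS a p sb su k : xunder G a p b sb su k.+1 =
  (a - p) *: ones R n + G *m xunder G a p b sb su k + b *: (G *m xbar G a p b sb su k).
Proof. by []. Qed.

Lemma xunder_swap a p sb su k : xunder G a p b sb su k = xbar G a p b su sb k.
Proof.
have swap : xpair G a p b su sb k = ((xpair G a p b sb su k).2, (xpair G a p b sb su k).1).
  by elim: k => //= k ->.
by rewrite /xunder /xbar swap.
Qed.

Lemma xpair_sum_diffS a p sb su k :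
  xbar G a p b sb su k.+1 + xunder G a p b sb su k.+1 =
    (2 * (a - p)) *: ones R n + ((1 + b) *: G) *m (xbar G a p b sb su k + xunder G a p b sb su k)
  /\ xbar G a p b sb su k.+1 - xunder G a p b sb su k.+1 =
    ((1 - b) *: G) *m (xbar G a p b sb su k - xunder G a p b sb su k).
Proof.
rewrite xbarS xunderS -!scalemxAl mulmxDr mulmxBr.
set y := G *m xbar _ _ _ _ _ _ _; set z := G *m xunder _ _ _ _ _ _ _.
by split; apply/matrixP => r c; rewrite !mxE; ring.
Qed.

Lemma xpair_ge0 {a p sb su} : (forall i j, 0 <= G i j) -> p <= a -> 0 <= b ->
    (forall i, 0 <= sb i 0) -> (forall i, 0 <= su i 0) ->
  forall k i, 0 <= xbar G a p b sb su k i 0 /\ 0 <= xunder G a p b sb su k i 0.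
Proof.
move=> hG hap hb hsb hsu; elim=> [|k IH] i; first by split.
have Gx_ge0 (x : 'cV[R]_n) : (forall l, 0 <= x l 0) -> 0 <= (G *m x) i 0.
  by move=> hx; rewrite mxE sumr_ge0 // => l _; rewrite mulr_ge0.
have Gxb := Gx_ge0 _ (fun l => (IH l).1); have Gxu := Gx_ge0 _ (fun l => (IH l).2).
move: Gxb Gxu; rewrite xbarS xunderS !mxE mulr1 => Gxb Gxu.
by split; (apply: addr_ge0; [apply: addr_ge0; rewrite ?subr_ge0 | apply: mulr_ge0]).
Qed.

Lemma xpair_seedD a p sb su e t k :
  xbar G a p b (sb + t *: e) su k = xbar G a p b sb su k + t *: xbar G p p b e 0 k /\
  xunder G a p b (sb + t *: e) su k = xunder G a p b sb su k + t *: xunder G p p b e 0 k.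
Proof.
elim: k => [|k [IHb IHu]]; first by rewrite /xbar /xunder /= scaler0 addr0.
rewrite !xbarS !xunderS IHb IHu subrr scale0r !add0r !mulmxDr -!scalemxAr.
set x1 := G *m xbar _ _ _ _ _ _ _; set x2 := G *m xunder _ _ _ _ _ _ _.
set y1 := G *m xbar _ _ _ _ _ _ _; set y2 := G *m xunder _ _ _ _ _ _ _.
by split; apply/matrixP => r c; rewrite !mxE; ring.
Qed.

Lemma xpair_homogeneous p e k :
  xbar G p p b e 0 k + xunder G p p b e 0 k = ((1 + b) *: G) ^+ k *m e /\
  xbar G p p b e 0 k - xunder G p p b e 0 k = ((1 - b) *: G) ^+ k *m e.
Proof.
elim: k => [|k [IHs IHd]]; first by rewrite /xbar /xunder /= !expr0 !mul1mx addr0 subr0.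
have [-> ->] := xpair_sum_diffS p p e 0 k.
by rewrite subrr mulr0 scale0r add0r IHs IHd !exprS -!mulmxE mulmxA mulmxA.
Qed.

End Diffusion.

Lemma is_cvg_xbar_series {R : realType} {n} {G : 'M[R]_n} {a p b d : R} {sb su : 'cV[R]_n} :
  (forall i j, 0 <= G i j) -> p <= a -> 0 <= b -> 0 < d -> d < 1 ->
  (1%:M - (d * (1 + b)) *: G) \in unitmx ->
  (forall i j, 0 <= invmx (1%:M - (d * (1 + b)) *: G) i j) ->
  (forall i, 0 <= sb i 0) -> (forall i, 0 <= su i 0) ->
  cvgn (fun N => \sum_(0 <= k < N) d ^+ k * sum_entries (xbar G a p b sb su k)).
Proof.
move=> hG hap hb d0 d1 hu inv_ge0 hsb hsu.
have x_ge0 := xpair_ge0 G b hG hap hb hsb hsu.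
pose v k := d ^+ k *: (xbar G a p b sb su k + xunder G a p b sb su k).
pose c := (2 * (a - p)) *: ones R n.
have v_ge0 k i : 0 <= v k i 0.
  have [xb_ge0 xu_ge0] := x_ge0 k i.
  by rewrite !mxE mulr_ge0 ?addr_ge0 // exprn_ge0 // ltW.
have vS k : v k.+1 = d ^+ k.+1 *: c + (d * (1 + b)) *: G *m v k.
  rewrite /v; have [-> _] := xpair_sum_diffS G b a p sb su k.
  by rewrite scalerDr -!scalemxAl -!scalemxAr !scalerA exprS [d * d ^+ k * (1 + b)]mulrAC.
have g_le m i : (\sum_(0 <= k < m) d ^+ k.+1 *: c) i 0 <= ((d / (1 - d)) *: c) i 0.
  rewrite -scaler_suml !mxE mulr1; apply: ler_wpM2r; first by rewrite mulr_ge0 ?subr_ge0.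
  apply: le_trans (geometric_le_lim m (ltW d0) d0 _); last by rewrite gtr0_norm.
  by rewrite /series /=; apply: ler_sum => k _; rewrite exprS.
have V_le := affine_orbit_sum_le hu inv_ge0 v_ge0 vS g_le.
apply: nondecreasing_is_cvgn.
  apply/nondecreasing_seqP => N; rewrite big_nat_recr //= lerDl mulr_ge0 //.
    by rewrite exprn_ge0 // ltW.
  by rewrite /sum_entries sumr_ge0 // => i _; case: (x_ge0 N i).
exists (\sum_i (invmx (1%:M - (d * (1 + b)) *: G) *m (v 0%N + (d / (1 - d)) *: c)) i 0).
move=> _ [N _ <-]; apply: le_trans (ler_sum _ (fun i _ => V_le N i)).
rewrite (eq_bigr (fun i => \sum_(0 <= k < N) v k i 0)); last by move=> i _; rewrite summxE.
rewrite exchange_big /=; apply: ler_sum => k _.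
rewrite /sum_entries mulr_sumr; apply: ler_sum => i _.
by rewrite /v !mxE ler_pM2l ?exprn_gt0 // lerDl; case: (x_ge0 k i).
Qed.

Lemma cvg_xbar_delta_series {R : realType} {n} {G : 'M[R]_n} (p : R) {b d : R} (i : 'I_n) :
  (forall r s, (fun N => (\sum_(0 <= k < N) ((d * (1 + b)) *: G) ^+ k) r s) @ \oo -->
     invmx (1%:M - (d * (1 + b)) *: G) r s) ->
  (forall r s, (fun N => (\sum_(0 <= k < N) ((d * (1 - b)) *: G) ^+ k) r s) @ \oo -->
     invmx (1%:M - (d * (1 - b)) *: G) r s) ->
  (fun N => \sum_(0 <= k < N) d ^+ k * sum_entries (xbar G p p b (delta_mx i 0) 0 k))
    @ \oo --> cvec G b d i 0.
Proof.
set Mp := (d * (1 + b)) *: G; set Mm := (d * (1 - b)) *: G => Mp_cvg Mm_cvg.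
have term k : d ^+ k * sum_entries (xbar G p p b (delta_mx i 0) 0 k) =
    2^-1 * (\sum_r (Mp ^+ k) r i + \sum_r (Mm ^+ k) r i).
  have [xs xd] := xpair_homogeneous G b p (delta_mx i 0) k.
  have -> : xbar G p p b (delta_mx i 0) 0 k =
      2^-1 *: (((1 + b) *: G) ^+ k *m delta_mx i 0 + ((1 - b) *: G) ^+ k *m delta_mx i 0).
    rewrite -xs -xd; apply/matrixP => r c; rewrite !mxE.
    set x := xbar _ _ _ _ _ _ _ _ _; set u := xunder _ _ _ _ _ _ _ _ _.
    by field.
  rewrite /sum_entries mulr_sumr -big_split mulr_sumr; apply: eq_bigr => r _.
  by rewrite -!colE !mxE /Mp /Mm !exprZmx !mxE !exprMn /=; ring.
have -> : (fun N => \sum_(0 <= k < N) d ^+ k * sum_entries (xbar G p p b (delta_mx i 0) 0 k)) =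
    (fun N => 2^-1 * (\sum_r (\sum_(0 <= k < N) Mp ^+ k) r i +
                      \sum_r (\sum_(0 <= k < N) Mm ^+ k) r i)).
  apply/funext => N; rewrite (eq_bigr _ (fun k _ => term k)) -mulr_sumr big_split /=.
  by congr (_ * (_ + _)); rewrite exchange_big /=; apply: eq_bigr => r _; rewrite summxE.
have -> : cvec G b d i 0 =
    2^-1 * (\sum_r invmx (1%:M - Mp) r i + \sum_r invmx (1%:M - Mm) r i).
  have trE (c : R) : 1%:M - c *: G^T = (1%:M - c *: G)^T.
    by apply/matrixP => x y; rewrite !mxE eq_sym.
  rewrite /cvec !mxE -mulrDr addrC.
  by congr (_ * (_ + _)); apply: eq_bigr => r _; rewrite /ones mxE mulr1 trE -trmx_inv mxE.
by apply: cvgMl_tmp; apply: cvgD; apply: cvg_big => //; exact: add_continuous.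
Qed.

Lemma sqnorm2_add_delta (R : realType) n (x : 'cV[R]_n) (i : 'I_n) (t : R) :
  sqnorm2 (x + t *: delta_mx i 0) = sqnorm2 x + t * (2 * x i 0) + t * t.
Proof.
rewrite /sqnorm2 (bigD1 i) //= [in RHS](bigD1 i) //=.
have -> : \sum_(j < n | j != i) (x + t *: delta_mx i 0) j 0 ^+ 2 =
          \sum_(j < n | j != i) x j 0 ^+ 2.
  by apply: eq_bigr => j ji; rewrite !mxE (negbTE ji) /= mulr0 addr0.
by rewrite !mxE !eqxx /=; ring.
Qed.

Lemma Ubar_add_delta {R : realType} {n} {G : 'M[R]_n} {a p b d : R} {sb su : 'cV[R]_n}
    {i : 'I_n} {C : R} :
  cvgn (fun N => \sum_(0 <= k < N) d ^+ k * sum_entries (xbar G a p b sb su k)) ->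
  (fun N => \sum_(0 <= k < N) d ^+ k * sum_entries (xbar G p p b (delta_mx i 0) 0 k))
    @ \oo --> C ->
  forall t, Ubar G a p b d (sb + t *: delta_mx i 0) su =
    Ubar G a p b d sb su + t * (p * C - sb i 0) - 2^-1 * (t * t).
Proof.
move=> S_cvg T_cvg t; rewrite /Ubar sqnorm2_add_delta.
set S := fun N => _ in S_cvg; set T := fun N => _ in T_cvg.
have -> : limn (fun N => \sum_(0 <= k < N) d ^+ k *
    sum_entries (xbar G a p b (sb + t *: delta_mx i 0) su k)) = limn S + t * C.
  apply: cvg_lim => //.
  rewrite (_ : (fun N => _) = S \+ (fun N => t * T N)); last first.
    apply/funext => N; rewrite /S /T /= mulr_sumr -big_split /=; apply: eq_bigr => k _.
    have [-> _] := xpair_seedD G b a p sb su (delta_mx i 0) t k.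
    rewrite /sum_entries !mulr_sumr -big_split /=.
    by apply: eq_bigr => j _; rewrite !mxE; ring.
  by apply: cvgD => //; apply: cvgMl_tmp.
by field.
Qed.

Lemma Uunder_Ubar {R : realType} {n} (G : 'M[R]_n) (a p b d : R) (sb su : 'cV[R]_n) :
  Uunder G a p b d sb su = Ubar G a p b d su sb.
Proof.
rewrite /Uunder /Ubar; congr (_ * _ - _); congr (limn _).
by apply/funext => N; apply: eq_bigr => k _; rewrite xunder_swap.
Qed.

Lemma is_derive0_quadratic (R : realType) (u q : R) :
  is_derive (0 : R) (1 : R) (fun t : R => u + t * q - 2^-1 * (t * t)) q.
Proof.
apply: is_derive_eq.
by rewrite scaler0 add0r mul1r !scale0r addr0 scaler0 subr0 add0r /GRing.scale /= mulr1.
Qed.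

Section Utility.
Context {R : realType} {n : nat} {G : 'M[R]_n} {alpha p beta delta Lmax : R}.
Hypotheses (hG : forall i j, 0 <= G i j) (hap : p <= alpha)
  (hb0 : 0 <= beta) (hb1 : beta < 1) (hd0 : 0 < delta) (hd1 : delta < 1)
  (hL0 : 0 < Lmax) (hL1 : Lmax < (delta * (1 + beta))^-1)
  (hrho : spectral_radius_le G Lmax).

Let dp_gt0 : 0 < delta * (1 + beta).
Proof. by rewrite mulr_gt0 // ltr_wpDr. Qed.

Let spectral_gap (g : R) : 0 < g -> g <= delta * (1 + beta) ->
  (1%:M - g *: G) \in unitmx /\ forall i j, (fun N => ((g *: G) ^+ N) i j) @ \oo --> 0.
Proof.
move=> g0 g_le; have gL : g * Lmax < 1.
  apply: le_lt_trans (_ : delta * (1 + beta) * Lmax < 1).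
    by rewrite ler_wpM2r // ltW.
  by rewrite mulrC -ltr_pdivlMr // mul1r.
by split; [exact: unitmx_1_subZ hrho g0 gL | exact: expmx_cvg0 hrho (ltW hL0) g0 gL].
Qed.

Lemma is_derive_Ubar (sb su : 'cV[R]_n) (i : 'I_n) :
  (forall i, 0 <= sb i 0) -> (forall i, 0 <= su i 0) ->
  is_derive (0 : R) (1 : R)
    (fun t : R => Ubar G alpha p beta delta (sb + t *: delta_mx i 0) su)
    (p * cvec G beta delta i 0 - sb i 0).
Proof.
move=> hsb hsu.
have [up cp] := @spectral_gap _ dp_gt0 (lexx _).
have [||um cm] := @spectral_gap (delta * (1 - beta)).
- by rewrite mulr_gt0 // subr_gt0.
- by rewrite ler_pM2l // lerD2l (le_trans _ hb0) // oppr_le0.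
have Gp_ge0 r s : 0 <= ((delta * (1 + beta)) *: G) r s by rewrite mxE mulr_ge0 // ltW.
have up_ge0 := invmx_1_sub_ge0 Gp_ge0 up cp.
have S_cvg := is_cvg_xbar_series hG hap hb0 hd0 hd1 up up_ge0 hsb hsu.
have T_cvg := cvg_xbar_delta_series p i (cvg_neumann_series up cp) (cvg_neumann_series um cm).
rewrite (funext (Ubar_add_delta S_cvg T_cvg)).
exact: is_derive0_quadratic.
Qed.

End Utility.

Theorem lemma1 (R : realType) (n : nat) (hn : (0 < n)%N) (G : 'M[R]_n)
  (hG : forall i j, 0 <= G i j) (alpha p beta delta Lmax : R)
  (hap : p <= alpha) (hb0 : 0 <= beta) (hb1 : beta < 1)
  (hd0 : 0 < delta) (hd1 : delta < 1)
  (hL0 : 0 < Lmax) (hL1 : Lmax < (delta * (1 + beta))^-1)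
  (hrho : spectral_radius_le G Lmax)
  (sb su : 'cV[R]_n) (hsb : forall i, 0 <= sb i 0) (hsu : forall i, 0 <= su i 0)
  (i : 'I_n) :
  is_derive (0 : R) (1 : R)
    (fun t : R => Ubar G alpha p beta delta (sb + t *: delta_mx i 0) su)
    (p * cvec G beta delta i 0 - sb i 0)
  /\
  is_derive (0 : R) (1 : R)
    (fun t : R => Uunder G alpha p beta delta sb (su + t *: delta_mx i 0))
    (p * cvec G beta delta i 0 - su i 0).
Proof.
have dUbar := is_derive_Ubar hG hap hb0 hb1 hd0 hd1 hL0 hL1 hrho.
split; first exact: dUbar hsb hsu.
rewrite (funext (fun t => Uunder_Ubar G alpha p beta delta sb (su + t *: delta_mx i 0))).
exact: dUbar hsu hsb.
Qed.
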